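(* Let $X$ be a finite metric space with points labelled $x_1,\dots,x_m$, and regard its isometry group $\mathrm{Iso}(X)$ as a subgroup of the symmetric group $\mathfrak{S}_m$. Then the following assignment is a well-defined bijection $$\mathcal{L}(X)\;\longrightarrow\;\Big(\bigsqcup_{\substack{(r_1,\dots,r_m)\\ r_i\ge1,\ n=\sum r_i}}\mathrm{Met}_n/(\mathfrak{S}_{r_1}\times\cdots\times\mathfrak{S}_{r_m})\Big)\Big/\mathrm{Iso}(X):$$ given a line along a surjection $f\colon Y\to X$ with $\#Y=n$, set $r_i=\#f^{-1}(x_i)$, label the points of $Y$ so that $f^{-1}(x_i)=\{y_i^1,\dots,y_i^{r_i}\}$, and send the line to the class of the distance matrix of $Y$ with respect to the ordering $(y_1^1,\dots,y_1^{r_1},\dots,y_m^1,\dots,y_m^{r_m})$, in the component indexed by $(r_1,\dots,r_m)$. Here the tuple $(r_1,\dots,r_m)$ partitions the rows and columns of each matrix in $\mathrm{Met}_n$ into $m$ consecutive sections of sizes $r_1,\dots,r_m$; the factor $\mathfrak{S}_{r_i}$ acts by simultaneously permuting the rows and columns within the $i$-th section; and $\mathrm{Iso}(X)$ acts by permuting the sections (an element $\rho$ moving section $i$ to position $\rho(i)$, with the tuple $(r_1,\dots,r_m)$ permuted accordingly).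
   Context: For finite metric spaces $(X,d_X)$, $(Y,d_Y)$ and a surjection $f\colon Y\to X$, the line from $Y$ to $X$ along $f$ is the family $(Y_{f,t})_{0<t\le1}$ of metric spaces $Y_{f,t}=(Y,d_{f,t})$, $d_{f,t}(y,y')=t\,d_Y(y,y')+(1-t)\,d_X(f(y),f(y'))$. The set of lines to $X$, $\mathcal{L}(X)$, is the set of all such lines (over all finite metric spaces $Y$ and all surjections $f\colon Y\to X$) modulo the relation: $(Y_{f,t})\sim(Y_{g,t})$ (for $f,g\colon Y\to X$) if there exist isometries $h\colon Y\to Y$ and $k\colon X\to X$ with $k\circ f=g\circ h$. $\mathrm{Met}_n$ is the set of real $n\times n$ matrices $(d_{ij})$ with $d_{ii}=0$, $d_{ij}=d_{ji}>0$ for $i\neq j$, and $d_{ij}+d_{jk}\ge d_{ik}$ for all $i,j,k$ (i.e. distance matrices of ordered $n$-point metric spaces). *)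

From HB Require Import structures.
From mathcomp Require Import all_boot all_order all_algebra all_fingroup.
From mathcomp Require Import reals.
Set Implicit Arguments. Unset Strict Implicit. Unset Printing Implicit Defensive.
Import Order.TTheory GRing.Theory Num.Theory.
Local Open Scope ring_scope.

Definition is_metric (R : realType) (n : nat) (d : 'M[R]_n) : Prop :=
  (forall i, d i i = 0) /\
  (forall i j, i != j -> 0 < d i j) /\
  (forall i j, d i j = d j i) /\
  (forall i j k, d i k <= d i j + d j k).

Definition is_isometry (R : realType) (m : nat) (dX : 'M[R]_m)
  (k : {perm 'I_m}) : Prop :=
  forall i j, dX (k i) (k j) = dX i j.

(* Data of a line to X = ('I_m, dX): a finite metric space Y = ('I_n, dY)
   (every finite metric space is isometric to one of these) and a map
   f : Y -> X.  The line itself is the family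
   d_{f,t}(y,y') = t dY(y,y') + (1-t) dX(f y, f y'), 0 < t <= 1,
   which is determined by (dY, f). *)
Record line_data (R : realType) (m : nat) := LineData {
  ln_n : nat;
  ln_d : 'M[R]_ln_n;
  ln_f : 'I_ln_n -> 'I_m }.
Arguments ln_n {R m} l.
Arguments ln_d {R m} l.
Arguments ln_f {R m} l _.

Definition valid_line (R : realType) (m : nat) (L : line_data R m) : Prop :=
  is_metric (ln_d L) /\ (forall x : 'I_m, exists y, ln_f L y = x).

(* The equivalence relation defining L(X): isometries h of the source and
   k of X with k o f = g o h (transported along an isometry h : Y -> Y'
   since Y is only represented up to isometry). *)
Definition line_equiv (R : realType) (m : nat) (dX : 'M[R]_m)
  (L L' : line_data R m) : Prop :=
  exists (h : 'I_(ln_n L) -> 'I_(ln_n L')) (k : {perm 'I_m}),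
    [/\ bijective h,
        (forall a b, ln_d L' (h a) (h b) = ln_d L a b),
        is_isometry dX k &
        (forall y, k (ln_f L y) = ln_f L' (h y))].

Record sec_data (R : realType) (m : nat) := SecData {
  sd_n : nat;
  sd_r : 'I_m -> nat;
  sd_M : 'M[R]_sd_n }.
Arguments sd_n {R m} s.
Arguments sd_r {R m} s _.
Arguments sd_M {R m} s.

Definition valid_sec (R : realType) (m : nat) (T : sec_data R m) : Prop :=
  [/\ (forall i, (1 <= sd_r T i)%N),
      sd_n T = (\sum_(i < m) sd_r T i)%N &
      is_metric (sd_M T)].

Definition in_section (m : nat) (r : 'I_m -> nat) (i : 'I_m) (a : nat) : bool :=
  ((\sum_(j < m | (j < i)%N) r j)%N <= a)%N &&
  (a < \sum_(j < m | (j <= i)%N) r j)%N.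

Definition sec_equiv (R : realType) (m : nat) (dX : 'M[R]_m)
  (T T' : sec_data R m) : Prop :=
  exists (rho : {perm 'I_m}) (sigma : 'I_(sd_n T) -> 'I_(sd_n T')),
    [/\ is_isometry dX rho,
        (forall i, sd_r T' (rho i) = sd_r T i),
        bijective sigma,
        (forall (a : 'I_(sd_n T)) i, in_section (sd_r T) i a ->
                     in_section (sd_r T') (rho i) (sigma a)) &
        (forall a b, sd_M T' (sigma a) (sigma b) = sd_M T a b)].

Definition assigns (R : realType) (m : nat) (L : line_data R m)
  (T : sec_data R m) : Prop :=
  (forall i, sd_r T i = #|[set y | ln_f L y == i]|) /\
  exists ell : 'I_(sd_n T) -> 'I_(ln_n L),
    [/\ bijective ell,
        (forall (a : 'I_(sd_n T)) i, in_section (sd_r T) i a -> ln_f L (ell a) = i) &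
        (forall a b, sd_M T a b = ln_d L (ell a) (ell b))].

From HB Require Import structures.
From mathcomp Require Import all_boot all_order all_algebra all_fingroup.
From mathcomp Require Import reals.
Set Implicit Arguments. Unset Strict Implicit. Unset Printing Implicit Defensive.

(* The assignment only relabels Y, fibre by fibre: a surjection f : Y -> X
   is the same thing as an ordering of Y into consecutive blocks of sizes
   r_i = #f^-1(x_i), unique up to permuting each block, and an equivalence
   (h, k) of lines is exactly such a block permutation composed with the
   isometry k of X moving the blocks.  Nothing about the metric of X is
   used beyond the definition of Iso(X). *)

Lemma card_interval n lo hi : (hi <= n)%N ->
  #|[set a : 'I_n | (lo <= a < hi)%N]| = (hi - lo)%N.
Proof.
move=> hi_n.
rewrite -sum1_card (eq_bigl (fun a : 'I_n => lo <= a < hi)%N) => [|a]; last by rewrite inE.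
rewrite -(big_mkord (fun a => lo <= a < hi)%N (fun=> 1%N)).
rewrite -(big_nat_widen _ _ _ _ _ hi_n) -(big_nat_widenl _ _ _ xpredT) //.
by rewrite sum_nat_const_nat muln1.
Qed.

Section ConsecutiveSections.

Variables (m : nat) (r : 'I_m -> nat).

Definition sec_start (k : nat) : nat := (\sum_(j < m | (j < k)%N) r j)%N.

Lemma leq_sec_start k l : (k <= l)%N -> (sec_start k <= sec_start l)%N.
Proof.
move=> le_kl; rewrite /sec_start [X in (X <= _)%N]big_mkcond [X in (_ <= X)%N]big_mkcond.
by apply: leq_sum => j _; case: ifP => // lt_jk; rewrite (leq_trans lt_jk le_kl).
Qed.

Lemma sec_start0 : sec_start 0 = 0%N.
Proof. by rewrite /sec_start big_pred0. Qed.

Lemma sec_startS (i : 'I_m) : sec_start i.+1 = (sec_start i + r i)%N.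
Proof.
rewrite /sec_start (bigD1 i) //= addnC; congr (_ + _)%N.
by apply: eq_bigl => j; rewrite ltnS ltn_neqAle andbC.
Qed.

Lemma sec_start_sum k : (m <= k)%N -> sec_start k = (\sum_i r i)%N.
Proof. by move=> le_mk; apply: eq_bigl => j; rewrite (leq_trans (ltn_ord j) le_mk). Qed.

Lemma in_sectionE i a :
  in_section r i a = (sec_start i <= a < sec_start i.+1)%N.
Proof. by []. Qed.

Lemma in_section_exists a : (a < \sum_i r i)%N -> exists i, in_section r i a.
Proof.
rewrite -(sec_start_sum (leqnn m)).
suff: forall k, (a < sec_start k)%N -> exists i, in_section r i a by apply.
elim=> [|k IHk]; first by rewrite sec_start0.
case: (ltnP a (sec_start k)) => [/IHk // | le_ka].
case: (ltnP k m) => [lt_km lt_ak | le_mk].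
  by exists (Ordinal lt_km); rewrite in_sectionE /= le_ka.
by rewrite (sec_start_sum (leqW le_mk)) -(sec_start_sum le_mk) ltnNge le_ka.
Qed.

Lemma in_section_uniq i j a : in_section r i a -> in_section r j a -> i = j.
Proof.
wlog le_ij : i j / (i <= j)%N => [wlog_ij ai aj|].
  by case: (leqP i j) => [|/ltnW] ?; [exact: wlog_ij | apply/esym; exact: wlog_ij].
rewrite !in_sectionE => /andP[_ lt_ai] /andP[le_ja _]; apply/val_inj/eqP.
rewrite eqn_leq le_ij leqNgt; apply: contraTN lt_ai => lt_ij.
by rewrite -leqNgt (leq_trans (leq_sec_start lt_ij) le_ja).
Qed.

Lemma card_in_section n i : (\sum_j r j <= n)%N ->
  #|[set a : 'I_n | in_section r i a]| = r i.
Proof.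
move=> le_sum_n; under eq_finset do rewrite in_sectionE.
rewrite card_interval; first by rewrite sec_startS addKn.
by rewrite (leq_trans _ le_sum_n) // -(sec_start_sum (leqnn m)) leq_sec_start.
Qed.

Lemma section_index n : n = (\sum_i r i)%N ->
  exists s : 'I_n -> 'I_m, forall (a : 'I_n) i, in_section r i a = (s a == i).
Proof.
move=> n_sum; have /fin_all_exists[s sP] : forall a : 'I_n, exists i, in_section r i a.
  by move=> a; apply: in_section_exists; rewrite -n_sum.
exists s => a i; apply/idP/eqP => [ai | <-]; last exact: sP.
exact: in_section_uniq (sP a) ai.
Qed.

End ConsecutiveSections.

Lemma sum_card_fibres (A I : finType) (f : A -> I) :
  (\sum_i #|[set y | f y == i]|)%N = #|A|.
Proof.
rewrite -sum1_card (partition_big f xpredT) //=.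
by apply: eq_bigr => i _; rewrite -sum1_card; apply: eq_bigl => y; rewrite inE.
Qed.

Lemma card_fibre_conj (A B I J : finType) (f : A -> I) (g : B -> J)
    (h : A -> B) (k : I -> J) :
  bijective h -> injective k -> (forall y, k (f y) = g (h y)) ->
  forall i, #|[set y | g y == k i]| = #|[set y | f y == i]|.
Proof.
case=> h' hK h'K k_inj kfgh i.
suff -> : [set y | g y == k i] = h @: [set y | f y == i].
  by rewrite card_imset //; exact: can_inj hK.
apply/setP => y; rewrite -[y]h'K mem_imset ?inE -?kfgh ?(inj_eq k_inj) //.
exact: can_inj hK.
Qed.

Lemma fibrewise_bijection (A B I : finType) (s : A -> I) (f : B -> I) :
  (forall i, #|[set a | s a == i]| = #|[set y | f y == i]|) ->
  exists ell : A -> B, bijective ell /\ forall a, f (ell a) = s a.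
Proof.
move=> card_eq.
pose SA i := enum [set a | s a == i]; pose SB i := enum [set y | f y == i].
have SA_s a : a \in SA (s a) by rewrite mem_enum inE.
(* ell sends the p-th element of a fibre of s to the p-th element of the
   corresponding fibre of f. *)
have /fin_all_exists[ell ellP] :
    forall a, exists y, y \in SB (s a) /\ index y (SB (s a)) = index a (SA (s a)).
  move=> a; have lt_idx : (index a (SA (s a)) < size (SB (s a)))%N.
    by rewrite -cardE -card_eq cardE index_mem.
  case E: (SB (s a)) => [|y0 t]; first by rewrite E in lt_idx.
  rewrite -E; exists (nth y0 (SB (s a)) (index a (SA (s a)))).
  by rewrite mem_nth ?index_uniq ?enum_uniq.
have f_ell a : f (ell a) = s a by case: (ellP a); rewrite mem_enum inE => /eqP.
have ell_inj : injective ell.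
  move=> a a' ell_eq; have s_eq : s a = s a' by rewrite -!f_ell ell_eq.
  have [_ idx_a] := ellP a; have [_ idx_a'] := ellP a'.
  rewrite s_eq ell_eq idx_a' in idx_a.
  by apply: (index_inj a _ _ (esym idx_a)); [rewrite -s_eq|]; apply: SA_s.
exists ell; split => //; apply: inj_card_bij => //.
by rewrite -(sum_card_fibres s) -(sum_card_fibres f) (eq_bigr _ (fun i _ => card_eq i)).
Qed.

Lemma is_metric_pullback (R : realType) n k (d : 'M[R]_n) (ell : 'I_k -> 'I_n) :
  injective ell -> is_metric d -> is_metric (\matrix_(a, b) d (ell a) (ell b))%R.
Proof.
move=> ell_inj [d0 [d_pos [d_sym d_tri]]].
split=> [i|]; first by rewrite mxE.
split=> [i j ij|]; first by rewrite mxE d_pos ?(inj_eq ell_inj).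
by split=> [i j|i j l]; rewrite !mxE.
Qed.

Lemma assigns_total (R : realType) m (L : line_data R m) : valid_line L ->
  exists T : sec_data R m, valid_sec T /\ assigns L T.
Proof.
case: L => n d f [/= d_metric f_surj].
pose r i := #|[set y | f y == i]|; pose N := (\sum_i r i)%N.
have [s sP] := section_index (erefl N).
have card_s i : #|[set a | s a == i]| = r i.
  by rewrite -(card_in_section i (leqnn N)); apply: eq_card => a; rewrite !inE sP.
have [ell [ell_bij f_ell]] := fibrewise_bijection card_s.
exists (SecData r (\matrix_(a, b) d (ell a) (ell b))%R); split.
  split=> //= [i|]; last exact: is_metric_pullback (bij_inj ell_bij) d_metric.
  by have [y fy] := f_surj i; rewrite card_gt0; apply/set0Pn; exists y; rewrite inE fy.
split=> //=; exists ell; split=> // [a i|a b]; last by rewrite mxE.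
by rewrite f_ell sP => /eqP.
Qed.

Lemma assigns_in_section (R : realType) m (L : line_data R m) T : assigns L T ->
  forall a : 'I_(sd_n T), exists i, in_section (sd_r T) i a.
Proof.
case=> r_fibre [ell [ell_bij _ _]] a; apply: in_section_exists.
rewrite (eq_bigr _ (fun i _ => r_fibre i)) sum_card_fibres -(bij_eq_card ell_bij).
by rewrite card_ord.
Qed.

Lemma assigns_respects_equiv (R : realType) m (dX : 'M[R]_m) (L L' : line_data R m) T T' :
  assigns L T -> assigns L' T' -> line_equiv dX L L' -> sec_equiv dX T T'.
Proof.
move=> AT AT'; have secT' := assigns_in_section AT'.
case: AT AT' => [r_fibre [ell [ell_bij f_ell d_ell]]].
case=> r'_fibre [ell' [ell'_bij f'_ell' d'_ell']].
case=> h [k [h_bij d_h k_iso f_h]].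
have [ell'V ell'K ell'VK] := ell'_bij.
exists k, (fun a => ell'V (h (ell a))); split=> //.
- move=> i; rewrite r_fibre r'_fibre.
  exact: card_fibre_conj h_bij perm_inj f_h i.
- by apply: bij_comp (bij_comp _ h_bij) ell_bij; exists ell'.
- move=> a i a_i; have [j a'_j] := secT' (ell'V (h (ell a))).
  by have := f'_ell' _ _ a'_j; rewrite ell'VK -f_h (f_ell _ _ a_i) => ->.
- by move=> a b; rewrite d'_ell' !ell'VK d_h d_ell.
Qed.

Lemma assigns_reflects_equiv (R : realType) m (dX : 'M[R]_m) (L L' : line_data R m) T T' :
  assigns L T -> assigns L' T' -> sec_equiv dX T T' -> line_equiv dX L L'.
Proof.
move=> AT AT'; have secT := assigns_in_section AT.
case: AT AT' => [_ [ell [ell_bij f_ell d_ell]]] [_ [ell' [ell'_bij f'_ell' d'_ell']]].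
case=> rho [sigma [rho_iso _ sigma_bij sigma_sec d_sigma]].
have [ellV ellK ellVK] := ell_bij.
exists (fun y => ell' (sigma (ellV y))), rho; split=> //.
- by apply: bij_comp (bij_comp ell'_bij sigma_bij) _; exists ell.
- by move=> a b; rewrite -d'_ell' d_sigma d_ell !ellVK.
- move=> y; have [i y_i] := secT (ellV y).
  by rewrite -[in LHS](ellVK y) (f_ell _ _ y_i) (f'_ell' _ _ (sigma_sec _ _ y_i)).
Qed.

Lemma sec_equiv_refl (R : realType) m (dX : 'M[R]_m) (T : sec_data R m) :
  sec_equiv dX T T.
Proof.
exists 1%g, id; split=> [i j|i||a i|]; rewrite ?perm1 //.
by exists id.
Qed.

Lemma assigns_surjective (R : realType) m (dX : 'M[R]_m) (T : sec_data R m) :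
  valid_sec T -> exists (L : line_data R m) (T' : sec_data R m),
    [/\ valid_line L, assigns L T' & sec_equiv dX T' T].
Proof.
case: T => N r M [/= r_pos N_sum M_metric].
have [s sP] := section_index N_sum.
have card_s i : #|[set a | s a == i]| = r i.
  by rewrite -(card_in_section i (eq_leq (esym N_sum))); apply: eq_card => a; rewrite !inE sP.
exists (LineData M s), (SecData r M); split; last exact: sec_equiv_refl.
- split=> //= i; have := r_pos i; rewrite -card_s card_gt0 => /set0Pn[a].
  by rewrite inE => /eqP; exists a.
- split=> //=; exists id; split=> // [|a i]; first by exists id.
  by rewrite sP => /eqP.
Qed.

Theorem proposition3p6 (R : realType) (m : nat) (dX : 'M[R]_m)
  (HX : is_metric dX) :
  (* the assignment is defined on every line and lands in the target *)
  (forall L : line_data R m, valid_line L ->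
     exists T : sec_data R m, valid_sec T /\ assigns L T) /\
  (* well-defined on classes *)
  (forall (L L' : line_data R m) (T T' : sec_data R m),
     valid_line L -> valid_line L' -> assigns L T -> assigns L' T' ->
     line_equiv dX L L' -> sec_equiv dX T T') /\
  (* injective on classes *)
  (forall (L L' : line_data R m) (T T' : sec_data R m),
     valid_line L -> valid_line L' -> assigns L T -> assigns L' T' ->
     sec_equiv dX T T' -> line_equiv dX L L') /\
  (* surjective on classes *)
  (forall T : sec_data R m, valid_sec T ->
     exists (L : line_data R m) (T' : sec_data R m),
       [/\ valid_line L, assigns L T' & sec_equiv dX T' T]).
Proof.
split; first exact: assigns_total.
split; first by move=> L L' T T' _ _; exact: assigns_respects_equiv.
split; first by move=> L L' T T' _ _; exact: assigns_reflects_equiv.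
exact: assigns_surjective.
Qed.
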